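(* Let $\lambda$ be a well-behaved hypergraph width measure, $k$ an integer, $H$ a hypergraph with $\lambda\text{-}tw(H)\le k$, and $W\subseteq V(H)$. Then there exists a set $S\subseteq V(H)$ with $\lambda_H(S)\le k$ such that for every connected component $C$ of $\underline{H}\setminus S$ (viewed as a vertex set) we have $\lambda_H(W\cap C)\le\lambda_H(W)/2$.
   Context: A hypergraph $H$ has finite vertex set $V(H)$ and edge set $E(H)$ of subsets of $V(H)$; $||H||$ is the size of its encoding. The Gaifman graph $\underline{H}$ is the graph on $V(H)$ with two distinct vertices adjacent iff they lie in a common edge; $\underline{H}\setminus S$ is the graph obtained by deleting the vertices of $S$. A tree decomposition of $H$ is a tree $T$ with bags $B_t\subseteq V(H)$ such that nodes containing a given vertex form a connected subtree and every edge of $\underline{H}$ is inside some bag. A width measure $\lambda$ assigns to each hypergraph $H$ a real function $\lambda_H$ on subsets of $V(H)$; $\lambda\text{-}tw(H)$ is the minimum over tree decompositions of $\max_t\lambda_H(B_t)$. $\lambda$ is well-behaved if: (1) $\lambda_H(\{x\})\ge1$; (2) $\lambda_H(S\cup T)\le\lambda_H(S)+\lambda_H(T)$; (3) equality in (2) for disjoint $S,T$ with no edge of $\underline{H}$ between them; (4) $\lambda_F(S)\le\lambda_H(T)$ whenever $V(H)\subseteq V(F)$, $E(H)\subseteq E(F)$ and $S\subseteq T$; (5) $\lambda_H(S)\le k$ is decidable in time $||H||^{O(k)}$. *)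

From mathcomp Require Import all_boot all_order all_algebra.
Set Implicit Arguments. Unset Strict Implicit. Unset Printing Implicit Defensive.
Import Order.TTheory GRing.Theory Num.Theory.
Local Open Scope ring_scope.

Record hgraph (T : finType) := Hgraph { hv : {set T}; he : {set {set T}} }.

Definition hwf (T : finType) (H : hgraph T) : Prop :=
  forall e, e \in he H -> e \subset hv H.

Definition gaif (T : finType) (H : hgraph T) : rel T :=
  fun u v => [&& u \in hv H, v \in hv H, u != v &
                 [exists e in he H, (u \in e) && (v \in e)]].

Definition gaif_minus (T : finType) (H : hgraph T) (S : {set T}) : rel T :=
  fun u v => [&& gaif H u v, u \in hv H :\: S & v \in hv H :\: S].

Definition is_component (T : finType) (H : hgraph T) (S C : {set T}) : Prop :=
  exists2 x, x \in hv H :\: S &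
    C = [set y in hv H :\: S | connect (gaif_minus H S) x y].

Definition is_tree (n : nat) (te : rel 'I_n) : Prop :=
  [/\ (0 < n)%N, irreflexive te, symmetric te,
      (forall s t : 'I_n, connect te s t) &
      #|[set p : 'I_n * 'I_n | te p.1 p.2]| = (n.-1 * 2)%N].

Definition tree_decomp (T : finType) (H : hgraph T) (n : nat)
    (te : rel 'I_n) (B : 'I_n -> {set T}) : Prop :=
  [/\ is_tree te,
      (forall t, B t \subset hv H),
      (forall v, v \in hv H -> exists t, v \in B t),
      (forall v s t, v \in B s -> v \in B t ->
         connect (fun a b => [&& te a b, v \in B a & v \in B b]) s t) &
      (forall u v, gaif H u v -> exists t, (u \in B t) && (v \in B t))].

Section Width.
Variable R : realFieldType.
Variable T : finType.
Variable lam : hgraph T -> {set T} -> R.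

Definition tw_le (H : hgraph T) (k : R) : Prop :=
  exists n (te : rel 'I_n) (B : 'I_n -> {set T}),
    tree_decomp H te B /\ forall t, lam H (B t) <= k.

(* conditions (1)-(4) of a well-behaved width measure; (5) is algorithmic *)
Definition well_behaved : Prop :=
  [/\ (forall H, hwf H -> forall x, x \in hv H -> 1 <= lam H [set x]),
      (forall H, hwf H -> forall S U : {set T}, S \subset hv H -> U \subset hv H ->
          lam H (S :|: U) <= lam H S + lam H U),
      (forall H, hwf H -> forall S U : {set T}, S \subset hv H -> U \subset hv H ->
          [disjoint S & U] ->
          (forall u v, u \in S -> v \in U -> ~~ gaif H u v) ->
          lam H (S :|: U) = lam H S + lam H U) &
      (forall H F, hwf H -> hwf F -> hv H \subset hv F -> he H \subset he F ->
          forall S U : {set T}, S \subset U -> U \subset hv H ->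
          lam F S <= lam H U)].
End Width.

From mathcomp Require Import all_boot all_order all_algebra.
From mathcomp Require Import zify lra.
Set Implicit Arguments. Unset Strict Implicit. Unset Printing Implicit Defensive.
Import Order.TTheory GRing.Theory Num.Theory.

(* Suppose no bag works: every bag B t leaves a heavy component C t of
   H - B t, i.e. lam (W :&: C t) > lam W / 2.  The bags meeting C t all lie on
   one side of some tree edge {t, f t}.  Since a tree has fewer edges than
   nodes, f (f t) = t for some t, and then C t and C (f t) live in bags on
   opposite sides of that edge: W :&: C t and W :&: C (f t) are disjoint and
   non-adjacent, so additivity and monotonicity of lam bound the sum of their
   widths by lam W, a contradiction. *)

Section Arcs.
Variables (T : finType) (r : rel T).

Definition arcs : {set T * T} := [set p | r p.1 p.2].

Lemma connect_cross (P : pred T) a b :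
  connect r a b -> P a -> ~~ P b -> exists x y, [/\ r x y, P x & ~~ P y].
Proof.
move=> /connectP [p r_p ->]; elim: p a r_p => [|c p IHp] a /=; first by move=> _ ->.
case/andP=> r_ac r_p Pa; case Pc: (P c); first exact: IHp.
by exists a, c; rewrite Pc.
Qed.

Lemma connect_preserves (Q : T -> Prop) x y :
  (forall a b, r a b -> Q a -> Q b) -> connect r x y -> Q x -> Q y.
Proof.
move=> Qr /connectP [p r_p ->]; elim: p x r_p => [|c p IHp] x //= /andP [r_xc r_p].
by move=> Qx; apply: IHp r_p (Qr _ _ r_xc Qx).
Qed.

Lemma connect_via_neighbour t u :
  connect r t u -> u != t ->
  exists2 s, r t s & connect [rel a b | [&& r a b, a != t & b != t]] s u.
Proof.
move=> /connectP [p r_p ->]; elim/last_ind: p r_p => [|p y IHp] /=.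
  by rewrite eqxx.
rewrite rcons_path last_rcons => /andP [r_p r_y] yt.
have [E|nE] := eqVneq (last t p) t; first by exists y; [rewrite -E | exact: connect0].
have [s r_ts c_s] := IHp r_p nE; exists s => //.
by apply: connect_trans c_s (connect1 _); rewrite /= r_y nE.
Qed.

(* The arcs (t, f t) and (f t, t), t in D, are pairwise distinct. *)
Lemma leq_card2_arcs (D : {set T}) (f : T -> T) :
  (forall t, t \in D -> r t (f t) && r (f t) t) ->
  (forall t, t \in D -> f t \in D -> f (f t) != t) ->
  (#|D| * 2 <= #|arcs|)%N.
Proof.
move=> r_f f_nc.
set D1 := [set (t, f t) | t in D]; set D2 := [set (f t, t) | t in D].
have card_D1 : #|D1| = #|D| by rewrite card_in_imset // => a b _ _ [].
have card_D2 : #|D2| = #|D| by rewrite card_in_imset // => a b _ _ [].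
have D12 : D1 :&: D2 = set0.
  apply/setP => p; rewrite !inE; apply/negP.
  case/andP=> /imsetP [a aD ->] /imsetP [b bD [ab ba]].
  by move: (f_nc b bD); rewrite -ab ba eqxx => /(_ aD).
have D12_arcs : D1 :|: D2 \subset arcs.
  apply/subsetP => p; rewrite !inE => /orP [] /imsetP [a aD ->] /=;
  by case/andP: (r_f a aD).
have := subset_leq_card D12_arcs.
by rewrite cardsU D12 cards0 card_D1 card_D2 subn0 muln2 -addnn.
Qed.

(* Every vertex but z steps to a neighbour strictly closer to z. *)
Lemma connected_card_arcs :
  symmetric r -> (forall x y, connect r x y) -> (#|T|.-1 * 2 <= #|arcs|)%N.
Proof.
move=> sym_r conn_r; have [T0|[z _]] := set_0Vmem [set: T].
  by rewrite -cardsT T0 cards0.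
pose walk k x := [exists p : k.-tuple T, path r x p && (last x p == z)].
have walk_ex x : exists k, walk k x.
  have /connectP [p r_p z_p] := conn_r x z; exists (size p); apply/existsP.
  by exists (in_tuple p); rewrite /= r_p -z_p eqxx.
pose d x := ex_minn (walk_ex x).
have dP x : walk (d x) x /\ forall k, walk k x -> (d x <= k)%N.
  by rewrite /d; case: ex_minnP.
have /fin_all_exists [g gP] x : exists y, x != z -> r x y && (d y < d x)%N.
  have [/existsP [[p sz_p] /andP [r_p /eqP z_p]] _] := dP x.
  move: sz_p r_p z_p; case: p => [|y p] /= sz_p.
    by move=> _ ->; exists z; rewrite eqxx.
  case/andP=> r_xy r_p z_p; exists y => _; rewrite r_xy /=.
  have sz_p' : size p == (d x).-1 by rewrite -(eqP sz_p).
  have walk_y : walk (d x).-1 y.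
    by apply/existsP; exists (Tuple sz_p'); rewrite /= r_p z_p eqxx.
  by have := (dP y).2 _ walk_y; lia.
rewrite -(cardsC1 z); apply: (leq_card2_arcs (f := g)) => x; rewrite !inE => xz.
  by have /andP [r_xg _] := gP x xz; rewrite r_xg sym_r r_xg.
move=> gz; have /andP [_ lt1] := gP x xz; have /andP [_ lt2] := gP _ gz.
by apply/eqP => ggx; move: lt2; rewrite ggx; lia.
Qed.

End Arcs.
Arguments connect_preserves {T r} Q {x y}.

Section TreeSides.
Variables (n : nat) (te : rel 'I_n).
Hypothesis tree : is_tree te.

Definition cut_edge (s t : 'I_n) : rel 'I_n :=
  fun a b => te a b && ~~ (((a == s) && (b == t)) || ((a == t) && (b == s))).

Definition side s t : {set 'I_n} := [set u | connect (cut_edge s t) s u].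

Lemma cut_edge_sym s t : symmetric (cut_edge s t).
Proof.
case: tree => _ _ sym_te _ _ a b; rewrite /cut_edge sym_te; congr (_ && ~~ _).
by case: (a == s); case: (b == t); case: (a == t); case: (b == s).
Qed.

Lemma cut_edgeC s t : cut_edge s t =2 cut_edge t s.
Proof.
move=> a b; rewrite /cut_edge; congr (_ && ~~ _).
by case: (a == s); case: (b == t); case: (a == t); case: (b == s).
Qed.

Lemma arcs_cut_edge s t : arcs (cut_edge s t) \subset arcs te :\ (s, t) :\ (t, s).
Proof.
apply/subsetP => [[a b]]; rewrite !inE /cut_edge /= => /andP [-> st_ab].
rewrite andbT; apply/andP; split; apply: contra st_ab => /eqP [-> ->].
  by rewrite !eqxx orbT.
by rewrite !eqxx.
Qed.

(* A connected graph on n nodes has at least n - 1 edges, one more than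
   te has once an edge is cut. *)
Lemma notin_side s t : te s t -> t \notin side s t.
Proof.
case: tree => _ irr_te sym_te conn_te card_te st; rewrite inE; apply/negP => c_st.
have conn_cut a b : connect (cut_edge s t) a b.
  apply: connect_sub (conn_te a b) => x y te_xy.
  case cut_xy: (cut_edge s t x y); first exact: connect1.
  move: cut_xy; rewrite /cut_edge te_xy /= => /negPn /orP [] /andP [/eqP -> /eqP ->] //.
  by rewrite (sym_connect_sym (cut_edge_sym s t)).
have := connected_card_arcs (cut_edge_sym s t) conn_cut.
have s_neq_t : s != t by apply: contraTneq st => ->; rewrite irr_te.
move: card_te; rewrite card_ord -[[set p | te p.1 p.2]]/(arcs te).
rewrite (cardsD1 (s, t)) (cardsD1 (t, s) (_ :\ _)) !inE /= st sym_te st.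
rewrite xpair_eqE (negbTE s_neq_t) andbF /= => <- /leq_trans.
move=> /(_ _ (subset_leq_card (arcs_cut_edge s t))).
rewrite !add1n => /ltnW; exact: negP (negbT (ltnn _)).
Qed.

Lemma side_edge_cross s t a b :
  te s t -> te a b -> a \in side s t -> b \notin side s t -> (a == s) && (b == t).
Proof.
move=> st ab a_s b_s; case st_ab: ((a == s) && (b == t)) => //.
case ts_ab: ((a == t) && (b == s)).
  by case/andP: ts_ab a_s => /eqP -> _; rewrite (negbTE (notin_side st)).
have cut_ab : cut_edge s t a b by rewrite /cut_edge ab st_ab ts_ab.
by move: b_s; rewrite inE (connect_trans _ (connect1 cut_ab)) // -inE.
Qed.

Lemma notin_side_sym s t u : te s t -> u \in side t s -> u \notin side s t.
Proof.
move=> st; rewrite !inE (eq_connect (cut_edgeC t s)); apply: contraTN => c_su.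
apply: contra (notin_side st); rewrite inE => c_tu; apply: connect_trans c_su _.
by rewrite (sym_connect_sym (cut_edge_sym s t)).
Qed.

Lemma exists_side t u : u != t -> exists2 s, te t s & u \in side s t.
Proof.
case: tree => _ _ _ conn_te _ ut.
have [s ts c_su] := connect_via_neighbour (conn_te t u) ut; exists s => //.
rewrite inE; apply: connect_sub c_su => a b /and3P [ab a_t b_t]; apply: connect1.
by rewrite /cut_edge ab (negbTE a_t) (negbTE b_t) !andbF.
Qed.

(* A tree has fewer edges than nodes, so a map choosing a neighbour of every
   node cannot provide n distinct edges. *)
Lemma tree_two_cycle (f : 'I_n -> 'I_n) :
  (forall t, te t (f t)) -> exists t, f (f t) = t.
Proof.
case: tree => n_gt0 _ sym_te _ card_te te_f.
have [/existsP [t /eqP ft]|/existsPn no_cycle] := boolP [exists t, f (f t) == t].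
  by exists t.
have te_f2 t : t \in setT -> te t (f t) && te (f t) t by rewrite te_f sym_te te_f.
have := leq_card2_arcs te_f2 (fun t _ _ => no_cycle t).
rewrite cardsT card_ord -[arcs te]/[set p | te p.1 p.2] card_te => n_le; exfalso; lia.
Qed.

End TreeSides.

Definition gaif_comp (T : finType) (H : hgraph T) (S : {set T}) (x : T) : {set T} :=
  [set y in hv H :\: S | connect (gaif_minus H S) x y].

Section Decomposition.
Variables (T : finType) (H : hgraph T) (n : nat) (te : rel 'I_n).
Variable B : 'I_n -> {set T}.
Hypothesis td : tree_decomp H te B.

Lemma bag_side_cross s t v a b :
  te s t -> v \in B a -> v \in B b -> a \in side te s t -> b \notin side te s t ->
  (v \in B s) && (v \in B t).
Proof.
case: td => tree _ _ conn_v _ st va vb a_s b_s.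
have [x [y [/and3P [xy vx vy] x_s y_s]]] :=
  connect_cross (P := fun u => u \in side te s t) (conn_v v a b va vb) a_s b_s.
by case/andP: (side_edge_cross tree st xy x_s y_s) => /eqP <- /eqP <-; rewrite vx vy.
Qed.

Lemma comp_bags_within (P : {set 'I_n}) (S : {set T}) x a y :
  (forall v a b, v \in B a -> v \in B b -> a \in P -> b \notin P -> v \in S) ->
  x \notin S -> x \in B a -> a \in P -> y \in gaif_comp H S x ->
  forall b, y \in B b -> b \in P.
Proof.
case: td => _ _ _ _ edge_bag boundary xS xa aP; rewrite inE => /andP [_ c_xy].
have within v : v \notin S ->
    forall c, v \in B c -> c \in P -> forall b, v \in B b -> b \in P.
  by move=> vS c vc cP b vb; apply: contraNT vS => bP; apply: boundary vc vb cP bP.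
apply: (connect_preserves (fun v => forall b, v \in B b -> b \in P) _ c_xy
  (within x xS a xa aP)) => u v /and3P [uv _ /setDP [_ vS]] Qu.
have [c /andP [uc vc]] := edge_bag u v uv.
exact: within vS c vc (Qu c uc).
Qed.

Lemma comp_bags_side s t x a y :
  te s t -> x \notin B t -> x \in B a -> a \in side te s t ->
  y \in gaif_comp H (B t) x -> forall b, y \in B b -> b \in side te s t.
Proof.
move=> st; apply: comp_bags_within => v c b vc vb c_s b_s.
by case/andP: (bag_side_cross st vc vb c_s b_s).
Qed.

Lemma comp_bags_sideC s t x a y :
  te s t -> x \notin B s -> x \in B a -> a \notin side te s t ->
  y \in gaif_comp H (B s) x -> forall b, y \in B b -> b \notin side te s t.
Proof.
move=> st xBs xa a_s y_x b yb; rewrite -in_setC.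
apply: comp_bags_within xBs xa _ y_x b yb; last by rewrite in_setC.
move=> v c d vc vd; rewrite !in_setC negbK => c_s d_s.
by case/andP: (bag_side_cross st vd vc d_s c_s).
Qed.

Lemma bags_separate (P : {set 'I_n}) (X Y : {set T}) :
  X \subset hv H ->
  (forall x b, x \in X -> x \in B b -> b \in P) ->
  (forall y b, y \in Y -> y \in B b -> b \notin P) ->
  [disjoint X & Y] /\ (forall u v, u \in X -> v \in Y -> ~~ gaif H u v).
Proof.
case: td => _ _ cover _ edge_bag XV XP YP; split.
  apply/pred0P => y /=; apply/negP => /andP [yX yY].
  have [a ya] := cover y (subsetP XV y yX).
  by move: (XP y a yX ya); rewrite (negbTE (YP y a yY ya)).
move=> u v uX vY; apply/negP => uv; have [c /andP [uc vc]] := edge_bag u v uv.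
by move: (XP u c uX uc); rewrite (negbTE (YP v c vY vc)).
Qed.

Lemma exists_side_bag t x :
  x \in hv H :\: B t -> exists s, te t s && [exists u in side te s t, x \in B u].
Proof.
case: td => tree _ cover _ _ /setDP [xV xBt]; have [u xu] := cover x xV.
have ut : u != t by apply: contraNneq xBt => <-.
have [s ts u_s] := exists_side tree ut; exists s; rewrite ts.
by apply/existsP; exists u; rewrite u_s.
Qed.

End Decomposition.

Local Open Scope ring_scope.

Lemma well_behaved_sum_le (R : realFieldType) (T : finType)
    (lam : hgraph T -> {set T} -> R) (H : hgraph T) (X Y W : {set T}) :
  well_behaved lam -> hwf H -> X \subset W -> Y \subset W -> W \subset hv H ->
  [disjoint X & Y] -> (forall u v, u \in X -> v \in Y -> ~~ gaif H u v) ->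
  lam H X + lam H Y <= lam H W.
Proof.
case=> _ _ lam_add lam_mono hwfH XW YW WV XY nadj.
have XV := subset_trans XW WV; have YV := subset_trans YW WV.
rewrite -(lam_add H hwfH X Y XV YV XY nadj).
by apply: lam_mono => //; rewrite subUset XW.
Qed.

Theorem mainTheorem19 (R : realFieldType) (T : finType)
    (lam : hgraph T -> {set T} -> R) (k : int) (H : hgraph T) (W : {set T}) :
  well_behaved lam -> hwf H -> tw_le lam H (k%:~R) -> W \subset hv H ->
  exists S : {set T},
    [/\ S \subset hv H, lam H S <= k%:~R &
        forall C, is_component H S C -> lam H (W :&: C) <= lam H W / 2].
Proof.
move=> wb hwfH [n [te [B [td Bk]]]] WV; have tree : is_tree te by case: td.
pose heavy S x := (x \in hv H :\: S) && (lam H W / 2 < lam H (W :&: gaif_comp H S x)).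
have [/existsP [t /forallP light]|/existsPn all_heavy] :=
  boolP [exists t, [forall x, ~~ heavy (B t) x]].
  exists (B t); split=> [|//|C [x xV ->]]; first by case: td.
  by move: (light x); rewrite /heavy xV /= -leNgt; exact.
have /fin_all_exists [xt /(_ _)/andP xtP] t : exists x, heavy (B t) x.
  by have /forallPn [x /negPn] := all_heavy t; exists x.
have /fin_all_exists [f /(_ _)/andP fP] t := exists_side_bag td (xtP t).1.
have [t fft] := tree_two_cycle tree (fun t => (fP t).1).
set s := f t in fft; have st : te s t by case: tree => _ _ -> _ _; exact: (fP t).1.
have [/exists_inP [a a_s xa] /exists_inP [b b_t xb]] := ((fP t).2, (fP s).2).
rewrite fft in b_t.
have [/setDP [_ xtBt] heavy_t] := xtP t; have [/setDP [_ xsBs] heavy_s] := xtP s.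
pose Xt := W :&: gaif_comp H (B t) (xt t); pose Xs := W :&: gaif_comp H (B s) (xt s).
have [XY nadj] := bags_separate td (P := side te s t) (X := Xt) (Y := Xs)
  (subset_trans (subsetIl W _) WV)
  (fun x c x_t xc => comp_bags_side td st xtBt xa a_s (setIP x_t).2 xc)
  (fun y c y_s yc => comp_bags_sideC td st xsBs xb (notin_side_sym tree st b_t)
                       (setIP y_s).2 yc).
have := well_behaved_sum_le wb hwfH (subsetIl _ _) (subsetIl _ _) WV XY nadj.
lra.
Qed.
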